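(* Let $\phi:K\to\mathbb R$ be a convex function that attains its minimum value at $0$. Then for all $x,y\in K$ with $|x|\le|y|$ we have $\phi(x)\le\phi(y)$.
   Context: $K$ is a field complete with respect to a non-trivial non-archimedean absolute value, $B_K=\{x\in K:|x|\le1\}$. A function $\phi:E\to\mathbb R$ on a $K$-vector space $E$ is convex if for all $n$, $x_1,\dots,x_n\in E$ and $\lambda_1,\dots,\lambda_n\in B_K$ with $\sum\lambda_i=1$ one has $\phi(\sum\lambda_ix_i)\le\max_i|\lambda_i|\phi(x_i)$. *)

From HB Require Import structures.
From mathcomp Require Import all_boot all_order all_algebra.
From mathcomp Require Import reals.
Set Implicit Arguments. Unset Strict Implicit. Unset Printing Implicit Defensive.
Import Order.TTheory GRing.Theory Num.Theory.
Local Open Scope ring_scope.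

Definition nonarch_abs (K : fieldType) (R : realType) (abs : K -> R) : Prop :=
  [/\ forall x, 0 <= abs x,
      forall x, abs x = 0 <-> x = 0,
      forall x y, abs (x * y) = abs x * abs y
    & forall x y, abs (x + y) <= Num.max (abs x) (abs y)].

Definition nontrivial_abs (K : fieldType) (R : realType) (abs : K -> R) : Prop :=
  exists x : K, x != 0 /\ abs x != 1.

Definition abs_cauchy (K : fieldType) (R : realType) (abs : K -> R)
  (u : nat -> K) : Prop :=
  forall e : R, 0 < e -> exists N : nat, forall m n : nat,
    (N <= m)%N -> (N <= n)%N -> abs (u m - u n) < e.

Definition abs_complete (K : fieldType) (R : realType) (abs : K -> R) : Prop :=
  forall u : nat -> K, abs_cauchy abs u ->
    exists l : K, forall e : R, 0 < e -> exists N : nat, forall n : nat,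
      (N <= n)%N -> abs (u n - l) < e.

(* Convexity of phi : E -> R on the K-vector space E := K (scalar action =
   multiplication). For n = 0 the condition sum lambda_i = 1 is impossible,
   so it suffices to quantify over families indexed by 'I_n.+1; the max over
   the (nonempty) index set is written as a big max seeded by the term i = 0. *)
Definition convex_fun (K : fieldType) (R : realType) (abs : K -> R)
  (phi : K -> R) : Prop :=
  forall (n : nat) (x lam : 'I_n.+1 -> K),
    (forall i, abs (lam i) <= 1) ->
    \sum_(i < n.+1) lam i = 1 ->
    phi (\sum_(i < n.+1) lam i * x i) <=
      \big[Num.max/(abs (lam ord0) * phi (x ord0))]_(i < n.+1)
         (abs (lam i) * phi (x i)).

From HB Require Import structures.
From mathcomp Require Import all_boot all_order all_algebra.
From mathcomp Require Import reals.
Import Order.TTheory GRing.Theory Num.Theory.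
Local Open Scope ring_scope.

(* Write x = c y with |c| <= 1.  Convexity only gives phi (sum lam_i x_i) <=
   max |lam_i| phi (x_i), which is useless when phi can be negative unless every
   |lam_i| = 1.  So decompose c y with three unit coefficients:
   c y = c y + 1 0 + (-c) 0 if |c| = 1, and c y = 1 y - (1 - c) y + (1 - c) 0
   if |c| < 1, where |1 - c| = 1 by the isosceles property.  Both give
   phi (c y) <= max (phi y) (phi 0) = phi y.  Completeness and non-triviality
   of the absolute value play no role. *)

Section NonArchimedeanAbs.
Context {R : realType} {K : fieldType} {abs : K -> R}.
Hypothesis Habs : nonarch_abs abs.

Lemma nabs0 : abs 0 = 0.
Proof. by case: Habs => _ abs_eq0 _ _; apply/abs_eq0. Qed.

Lemma nabs1 : abs 1 = 1.
Proof.
case: Habs => _ abs_eq0 absM _.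
have abs1_neq0 : abs 1 != 0 by apply/eqP => /abs_eq0/eqP; rewrite oner_eq0.
by apply: (mulfI abs1_neq0); rewrite -absM !mulr1.
Qed.

Lemma nabsN x : abs (- x) = abs x.
Proof.
case: Habs => abs_ge0 _ absM _.
have absN1 : abs (-1) = 1.
  have /eqP : abs (-1) ^+ 2 = 1 by rewrite expr2 -absM mulrNN mulr1 nabs1.
  rewrite sqrf_eq1 => /orP[/eqP // | /eqP absN1].
  by have := abs_ge0 (-1); rewrite absN1 ler0N1.
by rewrite -mulN1r absM absN1 mul1r.
Qed.

Lemma nabs_1B c : abs c < 1 -> abs (1 - c) = 1.
Proof.
case: Habs => _ _ _ absD abs_c_lt1.
apply/eqP; rewrite eq_le; apply/andP; split.
  by apply: le_trans (absD _ _) _; rewrite nabsN nabs1 ge_max lexx ltW.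
have := absD (1 - c) c.
by rewrite subrK nabs1 le_max [1 <= abs c]leNgt abs_c_lt1 orbF.
Qed.

Lemma nabs_le0 x : abs x <= abs 0 -> x = 0.
Proof.
case: Habs => abs_ge0 abs_eq0 _ _; rewrite nabs0 => abs_x_le0.
by apply/abs_eq0/eqP; rewrite eq_le abs_x_le0 abs_ge0.
Qed.

Lemma nabs_divr_le1 x y : y != 0 -> abs x <= abs y -> abs (x / y) <= 1.
Proof.
case: Habs => abs_ge0 abs_eq0 absM _ y_neq0 abs_xy.
have abs_y_gt0 : 0 < abs y.
  by rewrite lt_def abs_ge0 andbT; apply: contra y_neq0 => /eqP/abs_eq0->.
by rewrite -(ler_pM2r abs_y_gt0) -absM divfK // mul1r.
Qed.

Context {phi : K -> R}.
Hypothesis Hconv : convex_fun abs phi.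

Lemma convex_fun_le n (x lam : 'I_n.+1 -> K) (M : R) :
  (forall i, abs (lam i) <= 1) -> \sum_(i < n.+1) lam i = 1 ->
  (forall i, abs (lam i) * phi (x i) <= M) ->
  phi (\sum_(i < n.+1) lam i * x i) <= M.
Proof.
move=> lam_le1 sum_lam1 term_leM.
apply: le_trans (Hconv n x lam lam_le1 sum_lam1) _.
by elim/big_ind: _ => // p q p_leM q_leM; rewrite ge_max p_leM.
Qed.

Lemma convex_unit3 a b d u v w (M : R) :
  abs a = 1 -> abs b = 1 -> abs d = 1 -> a + b + d = 1 ->
  phi u <= M -> phi v <= M -> phi w <= M -> phi (a * u + b * v + d * w) <= M.
Proof.
move=> abs_a abs_b abs_d sum_abd phi_u phi_v phi_w.
have := @convex_fun_le 2 (fun i => [:: u; v; w]`_i)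
  (fun i => [:: a; b; d]`_i) M.
rewrite !big_ord_recr !big_ord0 /= !add0r; apply.
- by move=> [[|[|[|//]]] _] /=; rewrite ?abs_a ?abs_b ?abs_d.
- exact: sum_abd.
- by move=> [[|[|[|//]]] _] /=; rewrite ?abs_a ?abs_b ?abs_d mul1r.
Qed.

Hypothesis Hmin : forall z : K, phi 0 <= phi z.

Lemma convex_scale_le c y : abs c <= 1 -> phi (c * y) <= phi y.
Proof.
have [abs_c_eq1 _ | abs_c_neq1 abs_c_le1] := eqVneq (abs c) 1.
  have -> : c * y = c * y + 1 * 0 + (- c) * 0 by rewrite !mulr0 !addr0.
  apply: convex_unit3 => //; rewrite ?nabsN ?nabs1 //.
  by rewrite addrAC subrr add0r.
have abs_1Bc : abs (1 - c) = 1 by rewrite nabs_1B // lt_neqAle abs_c_neq1.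
have -> : c * y = 1 * y + (- (1 - c)) * y + (1 - c) * 0.
  by rewrite mulr0 addr0 -mulrDl opprB addrC subrK.
by apply: convex_unit3; rewrite ?nabsN ?nabs1 ?subrK.
Qed.

End NonArchimedeanAbs.

Theorem mainTheorem5 (R : realType) (K : fieldType) (abs : K -> R)
  (Habs : nonarch_abs abs) (Hnontriv : nontrivial_abs abs)
  (Hcomplete : abs_complete abs)
  (phi : K -> R) (Hconv : convex_fun abs phi)
  (Hmin : forall z : K, phi 0 <= phi z) :
  forall x y : K, abs x <= abs y -> phi x <= phi y.
Proof.
move=> x y abs_xy.
have [y_eq0 | y_neq0] := eqVneq y 0.
  by rewrite y_eq0 in abs_xy *; rewrite (nabs_le0 Habs _ abs_xy).
rewrite -(divfK y_neq0 x); apply: (convex_scale_le Habs Hconv Hmin).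
exact: nabs_divr_le1.
Qed.
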